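(* Let $(\Omega,\mathcal{A},\mathbb{P})$ be a probability space and $k\colon\Omega\times\mathbb{R}\times\mathbb{R}\to\mathbb{R}$ jointly measurable with $|k(\omega,s,t)|\le1$ almost surely, and define $K(s,t)=\mathbb{E}_\omega[k(\omega,s,t)]$, assumed continuous and positive definite. Let $\rho$ be a Borel probability measure on $Z=\mathbb{R}^d\times\mathbb{R}\times\mathbb{R}$ with compact support $S$. For $c\in L^2(\rho)$ set $$f_c(x)=\int_S c(a,b,t)K(\langle a,x\rangle+b,t)\,d\rho(a,b,t),\qquad x\in\mathbb{R}^d.$$ Then the subclass $H^{\mathrm{cont}}_\rho=\{f_c:c\in C(S)\}$ is dense in $H_\rho=\{f_c:c\in L^2(\rho)\}$ with respect to the uniform norm on any compact set $X\subset\mathbb{R}^d$. *)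

From HB Require Import structures.
From mathcomp Require Import all_boot all_order all_algebra.
From mathcomp Require Import all_classical all_reals all_analysis.
Set Implicit Arguments. Unset Strict Implicit. Unset Printing Implicit Defensive.
Import Order.TTheory GRing.Theory Num.Theory.
Import numFieldNormedType.Exports.
Local Open Scope classical_set_scope.
Local Open Scope ring_scope.

Definition Zsp (R : realType) (d : nat) := ('rV[R]_d * R * R)%type.

Definition BorelZ (R : realType) (d : nat) :=
  g_sigma_algebraType (@open (Zsp R d)).

Definition dotv (R : realType) (d : nat) (a x : 'rV[R]_d) : R :=
  \sum_(i < d) a ord0 i * x ord0 i.

Definition msupport (R : realType) (d : nat)
  (rho : {measure set (BorelZ R d) -> \bar R}) : set (Zsp R d) :=
  [set z | forall U : set (Zsp R d), open U -> U z -> (0 < rho U)%E].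

Definition L2 (R : realType) (d : nat)
  (rho : {measure set (BorelZ R d) -> \bar R}) (c : BorelZ R d -> R) : Prop :=
  measurable_fun setT c /\ (\int[rho]_z ((c z) ^+ 2)%:E < +oo)%E.

Definition pos_def_kernel (R : realType) (K : R -> R -> R) : Prop :=
  forall (n : nat) (s alpha : 'I_n -> R),
    0 <= \sum_(i < n) \sum_(j < n) alpha i * alpha j * K (s i) (s j).

Definition f_c (R : realType) (d : nat)
  (rho : {measure set (BorelZ R d) -> \bar R}) (K : R -> R -> R)
  (c : BorelZ R d -> R) (x : 'rV[R]_d) : R :=
  Rintegral rho (msupport rho)
    (fun z : BorelZ R d => c z * K (dotv z.1.1 x + z.1.2) z.2).

(* The feature map z = (a, b, t) |-> K(<a, x> + b, t) is continuous and X is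
   compact, so (tube lemma) every z0 in S has a ball on which the feature stays
   within w of its value at z0, uniformly in x in X.  Finitely many such balls
   cover the compact support S; let (psi_i) be a continuous partition of unity
   subordinate to them and replace c by the continuous function
   c' = sum_i beta_i psi_i, where beta_i is the psi_i-weighted mean of c.
   On the support of psi_i both c and c' integrate the feature against almost the
   same constant, so |f_c(x) - f_c'(x)| <= 2 w ||c||_1, and c is integrable
   because it is square integrable for the finite measure rho. *)

From HB Require Import structures.
From mathcomp Require Import all_boot all_order all_algebra.
From mathcomp Require Import all_classical all_reals all_analysis.
From mathcomp Require Import ring lra measurable_realfun.
Import Order.TTheory GRing.Theory Num.Theory.
Import numFieldNormedType.Exports.
Local Open Scope classical_set_scope.
Local Open Scope ring_scope.
Set Implicit Arguments. Unset Strict Implicit.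

Section partition_average.
Context d (T : measurableType d) (R : realType) (mu : {measure set T -> \bar R}).
Variables (D : set T) (mD : measurable D) (muD : (mu D < +oo)%E).

Lemma norm_le_bounded (f : T -> R) M :
  (forall z, D z -> `|f z| <= M) -> [bounded f z | z in D].
Proof.
move=> fM; exists M; split; first exact: num_real.
by move=> N MN z Dz; apply: le_trans (fM z Dz) (ltW MN).
Qed.

Lemma integrable_norm_le (f : T -> R) M : measurable_fun D f ->
  (forall z, D z -> `|f z| <= M) -> mu.-integrable D (EFin \o f).
Proof.
by move=> mf /norm_le_bounded; apply: measurable_bounded_integrable.
Qed.

Lemma integrableM_norm_le (c h : T -> R) M : mu.-integrable D (EFin \o c) ->
  measurable_fun D h -> (forall z, D z -> `|h z| <= M) ->
  mu.-integrable D (EFin \o (fun z => c z * h z)).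
Proof.
move=> ic mh /norm_le_bounded hM; have := integrableMl mD ic mh hM.
by apply: eq_integrable => // z _ /=; rewrite EFinM.
Qed.

Lemma integrableZlR (f : T -> R) k : mu.-integrable D (EFin \o f) ->
  mu.-integrable D (EFin \o (fun z => k * f z)).
Proof.
move=> fi; have := integrableZl mD k fi.
by apply: eq_integrable => // z _ /=; rewrite EFinM.
Qed.

Lemma Rintegral_sum I (s : seq I) (h : I -> T -> R) :
  (forall i, mu.-integrable D (EFin \o h i)) ->
  \int[mu]_(z in D) (\sum_(i <- s) h i z) = \sum_(i <- s) \int[mu]_(z in D) h i z.
Proof.
move=> ih; elim: s => [|i s IH].
  rewrite big_nil; under eq_Rintegral do rewrite big_nil.
  by rewrite Rintegral_cst // mul0r.
rewrite big_cons; under eq_Rintegral do rewrite big_cons.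
rewrite RintegralD // ?IH //.
have := @integrable_sum _ _ _ mu D mD _ s xpredT (fun i z => (h i z)%:E) (fun i _ => ih i).
by apply: eq_integrable => // z _ /=; rewrite sumEFin.
Qed.

Lemma Rintegral_weight_eq0 (f psi : T -> R) : measurable_fun D f ->
  measurable_fun D psi -> mu.-integrable D (EFin \o psi) ->
  (forall z, D z -> 0 <= psi z) -> \int[mu]_(z in D) psi z = 0 ->
  \int[mu]_(z in D) (f z * psi z) = 0.
Proof.
move=> mf mpsi ipsi psi0 Ipsi0.
have psi_ae0 : ae_eq mu D (EFin \o psi) (cst 0%E).
  have mpsiE : measurable_fun D (EFin \o psi) by apply/measurable_EFinP.
  apply/(ae_eq_integral_abs mu mD mpsiE).
  transitivity (\int[mu]_(z in D) (psi z)%:E)%E.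
    by apply: eq_integral => z /[!inE] Dz; rewrite /= ger0_norm ?psi0.
  by rewrite -[LHS]fineK ?integrable_fin_num // -/(Rintegral _ _ _) Ipsi0.
rewrite /Rintegral (ae_eq_integral (cst 0%E)) ?integral0 //.
- by apply/measurable_EFinP; apply: measurable_funM.
- by apply: filterS psi_ae0 => z /= psi0z /psi0z [->]; rewrite mulr0.
Qed.

Lemma Rintegral_weight_near_cst (c psi g : T -> R) (v w : R) :
  mu.-integrable D (EFin \o c) -> measurable_fun D psi -> measurable_fun D g ->
  (forall z, D z -> 0 <= psi z <= 1) ->
  (forall z, D z -> psi z != 0 -> `|g z - v| <= w) ->
  `|\int[mu]_(z in D) (c z * psi z * g z) - v * \int[mu]_(z in D) (c z * psi z)|
    <= w * \int[mu]_(z in D) (`|c z| * psi z).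
Proof.
move=> ic mpsi mg psi01 gv.
have psi_le1 z : D z -> `|psi z| <= 1.
  by move=> Dz; have /andP[psi0 psi1] := psi01 z Dz; rewrite ger0_norm.
have psi_gv z : D z -> psi z * `|g z - v| <= w * psi z.
  move=> Dz; have /andP[psi0 _] := psi01 z Dz.
  have [->|psi_neq0] := eqVneq (psi z) 0; first by rewrite mul0r mulr0.
  by rewrite mulrC ler_wpM2r // gv.
have psi_gv_le z : D z -> `|psi z * (g z - v)| <= `|w|.
  move=> Dz; have /andP[psi0 psi1] := psi01 z Dz.
  rewrite normrM ger0_norm //; have := psi_gv z Dz.
  have := ler_norm w; have := normr_ge0 w; nra.
have mgv : measurable_fun D (fun z => g z - v) by apply: measurable_funB.
have icpsi : mu.-integrable D (EFin \o (fun z => c z * psi z)).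
  exact: integrableM_norm_le ic mpsi psi_le1.
have icpsigv : mu.-integrable D (EFin \o (fun z => c z * (psi z * (g z - v)))).
  exact: integrableM_norm_le ic (measurable_funM mpsi mgv) psi_gv_le.
have -> : \int[mu]_(z in D) (c z * psi z * g z)
    = \int[mu]_(z in D) (c z * (psi z * (g z - v))) + v * \int[mu]_(z in D) (c z * psi z).
  rewrite -RintegralZl // -RintegralD //; last exact: integrableZlR.
  by apply: eq_Rintegral => z _; ring.
rewrite addrK.
apply: le_trans (le_normr_Rintegral mD icpsigv) _.
rewrite -RintegralZl //; last exact: integrableM_norm_le (integrable_norm ic) mpsi psi_le1.
apply: le_Rintegral => //; first exact: integrable_norm.
  by apply: integrableZlR; apply: integrableM_norm_le (integrable_norm ic) mpsi psi_le1.
move=> z Dz; have /andP[psi0 _] := psi01 z Dz.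
rewrite !normrM (ger0_norm psi0) [leRHS]mulrCA ler_wpM2l //.
exact: psi_gv.
Qed.

Lemma Rintegral_weight_near_cst1 (psi g : T -> R) (v w : R) :
  measurable_fun D psi -> measurable_fun D g ->
  (forall z, D z -> 0 <= psi z <= 1) ->
  (forall z, D z -> psi z != 0 -> `|g z - v| <= w) ->
  `|\int[mu]_(z in D) (psi z * g z) - v * \int[mu]_(z in D) psi z|
    <= w * \int[mu]_(z in D) psi z.
Proof.
move=> mpsi mg psi01 gv.
have i1 : mu.-integrable D (EFin \o cst (1 : R)).
  by apply: (@integrable_norm_le _ 1) => // z _; rewrite normr1.
have := Rintegral_weight_near_cst i1 mpsi mg psi01 gv.
have E1 : \int[mu]_(z in D) (cst 1 z * psi z * g z) = \int[mu]_(z in D) (psi z * g z).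
  by apply: eq_Rintegral => z _; rewrite mul1r.
have E2 : \int[mu]_(z in D) (cst 1 z * psi z) = \int[mu]_(z in D) psi z.
  by apply: eq_Rintegral => z _; rewrite mul1r.
have E3 : \int[mu]_(z in D) (`|cst 1 z| * psi z) = \int[mu]_(z in D) psi z.
  by apply: eq_Rintegral => z _; rewrite normr1 mul1r.
by rewrite E1 E2 E3.
Qed.

Lemma Rintegral_weight_average_err (c psi g : T -> R) (v w : R) :
  mu.-integrable D (EFin \o c) -> measurable_fun D psi -> measurable_fun D g ->
  (forall z, D z -> 0 <= psi z <= 1) ->
  (forall z, D z -> psi z != 0 -> `|g z - v| <= w) -> 0 <= w ->
  `|\int[mu]_(z in D) (c z * psi z * g z) -
    (\int[mu]_(z in D) (c z * psi z)) / (\int[mu]_(z in D) psi z) *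
      \int[mu]_(z in D) (psi z * g z)|
   <= 2 * w * \int[mu]_(z in D) (`|c z| * psi z).
Proof.
move=> ic mpsi mg psi01 gv w0.
have psi0 z : D z -> 0 <= psi z by move=> Dz; have /andP[] := psi01 z Dz.
have psi_le1 z : D z -> `|psi z| <= 1.
  by move=> Dz; have /andP[_ psi1] := psi01 z Dz; rewrite ger0_norm ?psi0.
have ipsi : mu.-integrable D (EFin \o psi) := integrable_norm_le mpsi psi_le1.
have icpsi : mu.-integrable D (EFin \o (fun z => c z * psi z)).
  exact: integrableM_norm_le ic mpsi psi_le1.
have near_c := Rintegral_weight_near_cst ic mpsi mg psi01 gv.
have near_1 := Rintegral_weight_near_cst1 mpsi mg psi01 gv.
set A := \int[mu]_(z in D) (c z * psi z) in near_c *.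
set W := \int[mu]_(z in D) psi z in near_1 *.
set B := \int[mu]_(z in D) (psi z * g z) in near_1 *.
set I := \int[mu]_(z in D) (`|c z| * psi z) in near_c *.
have I0 : 0 <= I by apply: Rintegral_ge0 => z Dz; rewrite mulr_ge0 ?psi0.
have AI : `|A| <= I.
  apply: le_trans (le_normr_Rintegral mD icpsi) _.
  apply: le_Rintegral => //; first exact: integrable_norm.
    exact: integrableM_norm_le (integrable_norm ic) mpsi psi_le1.
  by move=> z Dz; rewrite normrM (ger0_norm (psi0 z Dz)).
have W0 : 0 <= W by apply: Rintegral_ge0.
have [WE|W_neq0] := eqVneq W 0.
  have A0 : A = 0.
    apply: Rintegral_weight_eq0 => //.
    by apply/measurable_EFinP; case/integrableP: ic.
  rewrite A0 mulr0 subr0 in near_c.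
  by rewrite A0 mul0r mul0r subr0; nra.
have W_gt0 : 0 < W by rewrite lt0r W_neq0.
set X := \int[mu]_(z in D) (c z * psi z * g z) in near_c *.
have -> : X - A / W * B = (X - v * A) - A / W * (B - v * W) by field.
apply: le_trans (ler_normB _ _) _.
have : `|A / W * (B - v * W)| <= w * I.
  rewrite normrM normf_div (ger0_norm W0).
  apply: (@le_trans _ _ (`|A| / W * (w * W))); first by rewrite ler_wpM2l ?divr_ge0.
  by rewrite mulrCA -mulrA mulVf // mulr1 ler_wpM2l.
lra.
Qed.

(* When [\int psi i = 0] the coefficient is [_ / 0 = 0]; this is harmless
   since [psi i] then vanishes almost everywhere on [D]. *)
Definition partition_average I (s : seq I) (psi : I -> T -> R) (c : T -> R) z :=
  \sum_(i <- s) (\int[mu]_(y in D) (c y * psi i y)) / (\int[mu]_(y in D) psi i y) * psi i z.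

Lemma partition_average_err I (s : seq I) (psi : I -> T -> R) (c g : T -> R)
    (v : I -> R) (w : R) :
  mu.-integrable D (EFin \o c) -> (forall i, measurable_fun D (psi i)) ->
  measurable_fun D g ->
  (forall i z, D z -> 0 <= psi i z <= 1) ->
  (forall z, D z -> \sum_(i <- s) psi i z = 1) ->
  (forall i z, D z -> psi i z != 0 -> `|g z - v i| <= w) -> 0 <= w ->
  `|\int[mu]_(z in D) (c z * g z) -
    \int[mu]_(z in D) (partition_average s psi c z * g z)|
   <= 2 * w * \int[mu]_(z in D) `|c z|.
Proof.
move=> ic mpsi mg psi01 psi_sum1 gv w0.
have psi_le1 i z : D z -> `|psi i z| <= 1.
  by move=> Dz; have /andP[psi0 psi1] := psi01 i z Dz; rewrite ger0_norm.
have psi_g_le i z : D z -> `|psi i z * g z| <= `|v i| + w.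
  move=> Dz; have /andP[psi0 psi1] := psi01 i z Dz.
  have [->|psi_neq0] := eqVneq (psi i z) 0; first by rewrite mul0r normr0 addr_ge0.
  rewrite normrM (ger0_norm psi0) -[leRHS]mul1r.
  apply: ler_pM => //; rewrite addrC -lerBlDr.
  by apply: le_trans (lerB_dist _ _) (gv i z Dz psi_neq0).
have ipsig i : mu.-integrable D (EFin \o (fun z => psi i z * g z)).
  exact: integrable_norm_le (measurable_funM (mpsi i) mg) (psi_g_le i).
have icpsig i : mu.-integrable D (EFin \o (fun z => c z * psi i z * g z)).
  have := integrableM_norm_le ic (measurable_funM (mpsi i) mg) (psi_g_le i).
  by apply: eq_integrable => // z _ /=; rewrite mulrA.
have iacpsi i : mu.-integrable D (EFin \o (fun z => `|c z| * psi i z)).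
  exact: integrableM_norm_le (integrable_norm ic) (mpsi i) (psi_le1 i).
have E1 : \int[mu]_(z in D) (c z * g z) =
    \sum_(i <- s) \int[mu]_(z in D) (c z * psi i z * g z).
  rewrite -Rintegral_sum //; apply: eq_Rintegral => z /[!inE] Dz.
  by rewrite -big_distrl /= -big_distrr /= psi_sum1 // mulr1.
have E2 : \int[mu]_(z in D) (partition_average s psi c z * g z) =
    \sum_(i <- s) (\int[mu]_(y in D) (c y * psi i y)) / (\int[mu]_(y in D) psi i y)
      * \int[mu]_(z in D) (psi i z * g z).
  under [RHS]eq_bigr do rewrite -RintegralZl //.
  rewrite -Rintegral_sum //; last by move=> i; apply: integrableZlR.
  apply: eq_Rintegral => z _; rewrite big_distrl /=.
  by apply: eq_bigr => i _; rewrite mulrA.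
have E3 : \int[mu]_(z in D) `|c z| =
    \sum_(i <- s) \int[mu]_(z in D) (`|c z| * psi i z).
  rewrite -Rintegral_sum //; apply: eq_Rintegral => z /[!inE] Dz.
  by rewrite -big_distrr /= psi_sum1 // mulr1.
rewrite E1 E2 E3 -sumrB mulr_sumr.
apply: le_trans (ler_norm_sum _ _ _) _; apply: ler_sum => i _.
exact: Rintegral_weight_average_err ic (mpsi i) mg (psi01 i) (gv i) w0.
Qed.

End partition_average.

Lemma cvg_sum (U : Type) (F : set_system U) {FF : Filter F} (K : numFieldType)
    (V : normedModType K) I (s : seq I) (f : I -> U -> V) (l : I -> V) :
  (forall i, f i x @[x --> F] --> l i) ->
  \sum_(i <- s) f i x @[x --> F] --> \sum_(i <- s) l i.
Proof.
move=> fl; elim: s => [|i s IH].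
  by rewrite big_nil; under eq_fun do rewrite big_nil; exact: cvg_cst.
by rewrite big_cons; under eq_fun do rewrite big_cons; exact: cvgD.
Qed.

Lemma continuous_pair_section (U V W : topologicalType) (G : U * V -> W) (x : U) :
  continuous G -> continuous (fun z => G (x, z)).
Proof.
move=> cG z; apply: (continuous_comp (f := fun z => (x, z))); last exact: cG.
exact: cvg_pair (cvg_cst x) cvg_id.
Qed.

Lemma continuous_measurable_fun (R : realType) (d : nat) (D : set (BorelZ R d))
    (f : Zsp R d -> R) :
  measurable D -> continuous f -> measurable_fun D (f : BorelZ R d -> R).
Proof.
move=> mD /continuousP cf; apply: (measurability _ (RGenOpens.measurableE R)).
move=> _ [_ [a [b ->] <-]]; apply: measurableI => //; apply: sub_sigma_algebra.
exact/cf/interval_open.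
Qed.

Lemma closed_msupport (R : realType) (d : nat) (rho : {measure set BorelZ R d -> \bar R}) :
  closed (msupport rho).
Proof.
rewrite -[msupport rho]setCK; apply: open_closedC; rewrite openE => z /= Sz.
have [U [oU Uz rhoU]] : exists U, [/\ open U, U z & ~ (0 < rho U)%E].
  by apply: contrapT => nU; apply: Sz => U oU Uz; apply: contrapT => ?; apply: nU; exists U.
by apply: filterS (open_nbhs_nbhs (conj oU Uz)) => y Uy Sy; exact: rhoU (Sy U oU Uy).
Qed.

Lemma measurable_msupport (R : realType) (d : nat)
    (rho : {measure set BorelZ R d -> \bar R}) :
  measurable (msupport rho : set (BorelZ R d)).
Proof.
rewrite -[msupport rho]setCK; apply: measurableC; apply: sub_sigma_algebra.
exact/closed_openC/closed_msupport.
Qed.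

Lemma compact_tube (R : realType) (U : topologicalType) (V : pseudoMetricType R)
    (X : set U) (G : U * V -> R) (w : R) :
  compact X -> continuous G -> 0 < w ->
  exists2 r : V -> R, (forall z, 0 < r z) &
    forall z0 z, ball z0 (r z0) z -> forall x, X x -> `|G (x, z) - G (x, z0)| < w.
Proof.
move=> cX cG w0.
suff /choice[r rP] : forall z0, exists r, 0 < r /\
    forall z, ball z0 r z -> forall x, X x -> `|G (x, z) - G (x, z0)| < w.
  by exists r => [z|z0]; [case: (rP z) | case: (rP z0)].
move=> z0; have : \forall z \near z0, X `<=` (fun x => `|G (x, z) - G (x, z0)| < w).
  apply: ((compact_near_coveringP X).1 cX V (nbhs z0)
    (fun z x => `|G (x, z) - G (x, z0)| < w) _) => x Xx.
  have /cvgrPdist_lt/(_ (w / 2)) := cG (x, z0).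
  case; first by rewrite divr_gt0.
  move=> [A B] /= [nA nB] AB; exists (A, B) => // -[x' z] /= [Ax' Bz].
  have := AB (x', z) (conj Ax' Bz); have := AB (x', z0) (conj Ax' (nbhs_singleton nB)).
  rewrite /= -[G (x', z) - _](subrKA (G (x, z0))) => h1 h2.
  by apply: le_lt_trans (ler_normD _ _) _; rewrite distrC; lra.
by move=> /nbhs_ballP[r r0 near_r]; exists r; split => // z /near_r.
Qed.

Lemma compact_finite_ball_cover (R : realType) (M : pseudoMetricType R) (A : set M)
    (r : M -> R) :
  compact A -> (forall z, 0 < r z) ->
  exists s : seq M, forall z, A z -> exists2 j, j \in s & ball j (r j) z.
Proof.
move=> cA r_gt0.
pose F := filter_from setT (fun l : seq M => [set l' : seq M | {subset l <= l'}]).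
have FF : Filter F.
  apply: filter_from_filter; first by exists [::].
  move=> l1 l2 _ _; exists (l1 ++ l2) => // l /= sub_l.
  by split=> y yl; apply: sub_l; rewrite mem_cat yl ?orbT.
have [|l _ cover_l] := (compact_near_coveringP A).1 cA (seq M) F
  (fun l z => exists2 j, j \in l & ball j (r j) z) FF.
  move=> x Ax; exists (ball x (r x), [set l : seq M | {subset [:: x] <= l}]).
    by split; [exact: nbhsx_ballx | exists [:: x]].
  by move=> [x' l] /= [bx xl]; exists x => //; apply: xl; exact: mem_head.
by exists l => z Az; apply: (cover_l l).
Qed.

Section partition_of_unity.
Variables (R : realType) (V : normedModType R) (r : V -> R).
Hypothesis r_gt0 : forall a, 0 < r a.

Definition bump (a z : V) : R := Num.min 1 (Num.max 0 (2 - 2 * `|a - z| / r a)).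

Lemma bump_ge0_le1 a z : 0 <= bump a z <= 1.
Proof. by rewrite le_min ler01 le_max lexx ge_min lexx. Qed.

Lemma continuous_bump a : continuous (bump a).
Proof.
move=> z.
have affine : {for z, continuous (fun y => 2 - 2 * `|a - y| / r a)}.
  apply: cvgB; first exact: cvg_cst.
  apply: cvgM; last exact: cvg_cst.
  apply: cvgM; first exact: cvg_cst.
  by apply: cvg_norm; apply: cvgB; [exact: cvg_cst | exact: cvg_id].
have := continuous_min (f := cst 1) (cvg_cst _)
  (continuous_max (f := cst 0) (cvg_cst _) affine).
exact.
Qed.

Lemma bump_ball_half a z : ball a (r a / 2) z -> bump a z = 1.
Proof.
rewrite -ball_normE /= => az; apply/min_idPl; rewrite le_max; apply/orP; right.
have : 2 * `|a - z| / r a < 1 by rewrite ltr_pdivrMr // mul1r; lra.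
lra.
Qed.

Lemma bump_neq0_ball a z : bump a z != 0 -> ball a (r a) z.
Proof.
rewrite -ball_normE /=; apply: contraR; rewrite -leNgt => raz.
have : 2 <= 2 * `|a - z| / r a by rewrite ler_pdivlMr // ler_pM2l.
by rewrite /bump => ?; rewrite (@max_l _ _ 0) ?min_r //; lra.
Qed.

(* Dividing by [max 1 (sum of bumps)] keeps [pou s i] continuous everywhere;
   on the sets covered by the half balls the sum is at least 1. *)
Definition pou (s : seq V) (i z : V) : R :=
  bump i z / Num.max 1 (\sum_(j <- s) bump j z).

Lemma pou_ge0_le1 s i z : 0 <= pou s i z <= 1.
Proof.
have /andP[b0 b1] := bump_ge0_le1 i z.
have m1 : 1 <= Num.max 1 (\sum_(j <- s) bump j z) by rewrite le_max lexx.
rewrite divr_ge0 ?(le_trans ler01 m1) //= ler_pdivrMr ?(lt_le_trans ltr01 m1) //.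
by rewrite mul1r (le_trans b1 m1).
Qed.

Lemma continuous_pou s i : continuous (pou s i).
Proof.
move=> z; apply: cvgM; first exact: continuous_bump.
apply: cvgV; first by rewrite gt_eqF // lt_max ltr01.
apply: continuous_max; first exact: cvg_cst.
by apply: cvg_sum => j; exact: continuous_bump.
Qed.

Lemma pou_neq0_ball s i z : pou s i z != 0 -> ball i (r i) z.
Proof.
move=> pou_neq0; apply: bump_neq0_ball; apply/eqP => bump0.
by move: pou_neq0; rewrite /pou bump0 mul0r eqxx.
Qed.

Lemma pou_sum1 (s : seq V) z : (exists2 j, j \in s & ball j (r j / 2) z) ->
  \sum_(i <- s) pou s i z = 1.
Proof.
case=> j js /bump_ball_half bj1.
have sum_ge1 : 1 <= \sum_(i <- s) bump i z.
  rewrite (perm_big _ (perm_to_rem js)) big_cons bj1 lerDl sumr_ge0 // => i _.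
  by have /andP[] := bump_ge0_le1 i z.
by rewrite -mulr_suml max_r // divff // gt_eqF // (lt_le_trans ltr01).
Qed.

Lemma compact_pou (S : set V) : compact S ->
  exists s : seq V, forall z, S z -> \sum_(i <- s) pou s i z = 1.
Proof.
move=> cS; have [|s cover_s] := compact_finite_ball_cover (r := fun a => r a / 2) cS.
  by move=> a; rewrite divr_gt0.
by exists s => z /cover_s; exact: pou_sum1.
Qed.

End partition_of_unity.

Lemma continuous_feature (R : realType) (d : nat) (K : R -> R -> R) :
  continuous (fun st : R * R => K st.1 st.2) ->
  continuous (fun p : 'rV[R]_d * Zsp R d => K (dotv p.2.1.1 p.1 + p.2.1.2) p.2.2).
Proof.
move=> cK [x [[a b] t]].
apply: (@continuous_comp _ _ _
  (fun p : 'rV[R]_d * Zsp R d => (dotv p.2.1.1 p.1 + p.2.1.2, p.2.2))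
  (fun st => K st.1 st.2) _ _ (cK _)).
have cvg_z : (fun p : 'rV[R]_d * Zsp R d => p.2) @ (x, (a, b, t)) --> (a, b, t).
  exact: cvg_snd.
have cvg_x : (fun p : 'rV[R]_d * Zsp R d => p.1) @ (x, (a, b, t)) --> x.
  exact: cvg_fst.
have cvg_ab : (fun p : 'rV[R]_d * Zsp R d => p.2.1) @ (x, (a, b, t)) --> (a, b).
  exact: (cvg_comp _ _ cvg_z cvg_fst).
have cvg_t : (fun p : 'rV[R]_d * Zsp R d => p.2.2) @ (x, (a, b, t)) --> t.
  exact: (cvg_comp _ _ cvg_z cvg_snd).
have cvg_b : (fun p : 'rV[R]_d * Zsp R d => p.2.1.2) @ (x, (a, b, t)) --> b.
  exact: (cvg_comp _ _ cvg_ab cvg_snd).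
have cvg_a : (fun p : 'rV[R]_d * Zsp R d => p.2.1.1) @ (x, (a, b, t)) --> a.
  exact: (cvg_comp _ _ cvg_ab cvg_fst).
have cvg_dot : (fun p : 'rV[R]_d * Zsp R d => dotv p.2.1.1 p.1) @ (x, (a, b, t)) --> dotv a x.
  rewrite /dotv; apply: cvg_sum => i; apply: cvgM.
  - by apply: (cvg_comp _ (fun a : 'rV[R]_d => a ord0 i) cvg_a); exact: coord_continuous.
  - by apply: (cvg_comp _ (fun x : 'rV[R]_d => x ord0 i) cvg_x); exact: coord_continuous.
exact: cvg_pair (cvgD cvg_dot cvg_b) cvg_t.
Qed.

Lemma L2_integrable (R : realType) (d : nat) (rho : {finite_measure set BorelZ R d -> \bar R})
    (c : BorelZ R d -> R) (D : set (BorelZ R d)) :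
  measurable D -> L2 rho c -> rho.-integrable D (EFin \o c).
Proof.
move=> mD [mc ic2]; have mcD := measurable_funS measurableT (@subsetT _ D) mc.
apply/integrableP; split; first exact/measurable_EFinP.
have mc2 : measurable_fun setT (fun z => ((c z) ^+ 2 + 1)%:E).
  by apply/measurable_EFinP; apply: measurable_funD => //; apply: measurable_funX.
apply: (@le_lt_trans _ _ (\int[rho]_(z in D) ((c z) ^+ 2 + 1)%:E)%E).
  apply: ge0_le_integral => //.
  - by apply: measurableT_comp => //; exact/measurable_EFinP.
  - exact: measurable_funS measurableT (@subsetT _ D) mc2.
  - move=> z _ /=; rewrite lee_fin -real_normK ?num_real //.
    by have := normr_ge0 (c z); nra.
apply: (@le_lt_trans _ _ (\int[rho]_z ((c z) ^+ 2 + 1)%:E)%E).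
  by apply: ge0_subset_integral => // z _; rewrite lee_fin addr_ge0 // sqr_ge0.
under eq_integral do rewrite EFinD.
rewrite ge0_integralD //.
- by rewrite integral_cst // mul1e lte_add_pinfty // ltey_eq fin_num_measure.
- by move=> z _; rewrite lee_fin sqr_ge0.
- by apply/measurable_EFinP; apply: measurable_funX.
Qed.

Lemma f_c_continuous_approx (R : realType) (d : nat)
    (rho : {finite_measure set BorelZ R d -> \bar R}) (K : R -> R -> R)
    (X : set 'rV[R]_d) (c : BorelZ R d -> R) (w : R) :
  continuous (fun st : R * R => K st.1 st.2) -> compact (msupport rho) -> compact X ->
  rho.-integrable (msupport rho) (EFin \o c) -> 0 < w ->
  exists c' : BorelZ R d -> R,
    {within msupport rho, continuous (c' : Zsp R d -> R)} /\
    forall x, X x -> `|f_c rho K c x - f_c rho K c' x|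
                     <= 2 * w * \int[rho]_(z in msupport rho) `|c z|.
Proof.
move=> cK cS cX ic w_gt0; set S := msupport rho.
have mS : measurable (S : set (BorelZ R d)) := measurable_msupport rho.
have rhoS : (rho S < +oo)%E by rewrite ltey_eq fin_num_measure.
pose G := fun p : 'rV[R]_d * Zsp R d => K (dotv p.2.1.1 p.1 + p.2.1.2) p.2.2.
have cG : continuous G := continuous_feature cK.
have [r r_gt0 G_near] := compact_tube cX cG w_gt0.
have [s sum_pou1] := compact_pou r_gt0 cS.
exists (partition_average rho S s (pou r s) c); split.
  apply: continuous_subspaceT => z; apply: cvg_sum => i.
  by apply: cvgM; [exact: cvg_cst | exact: continuous_pou].
move=> x Xx.
apply: (partition_average_err (g := fun z => G (x, z)) (v := fun i => G (x, i)) mS rhoS ic).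
- by move=> i; apply: continuous_measurable_fun => //; exact: continuous_pou.
- by apply: continuous_measurable_fun => //; exact: continuous_pair_section.
- by move=> i z _; exact: pou_ge0_le1.
- exact: sum_pou1.
- by move=> i z _ /(pou_neq0_ball r_gt0)/G_near/(_ x Xx)/ltW.
- exact: ltW.
Qed.

Unset Implicit Arguments.
Set Strict Implicit.

Theorem lemma10 (R : realType) (dO : measure_display) (Omega : measurableType dO)
  (P : probability Omega R) (k : Omega -> R -> R -> R)
  (K : R -> R -> R) (d : nat)
  (rho : probability (BorelZ R d) R) :
  measurable_fun setT (fun p : Omega * (R * R) => k p.1 p.2.1 p.2.2) ->
  (forall s t : R, {ae P, forall w, `|k w s t| <= 1}) ->
  (forall s t : R, (K s t)%:E = (\int[P]_w (k w s t)%:E)%E) ->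
  continuous (fun st : R * R => K st.1 st.2) ->
  pos_def_kernel K ->
  compact (msupport rho) ->
  forall X : set 'rV[R]_d, compact X ->
  forall c : BorelZ R d -> R, L2 rho c ->
  forall eps : R, 0 < eps ->
  exists c' : BorelZ R d -> R,
    {within msupport rho, continuous (c' : Zsp R d -> R)} /\
    forall x, X x -> `|f_c rho K c x - f_c rho K c' x| < eps.
Proof.
move=> _ _ _ cK _ cS X cX c Lc eps eps_gt0.
have ic := L2_integrable (measurable_msupport rho) Lc.
set M := \int[rho]_(z in msupport rho) `|c z|.
have M_pos : 0 < 2 * M + 1 by rewrite ltr_wpDl ?mulr_ge0 ?Rintegral_ge0.
have [c' [cont_c' err]] := f_c_continuous_approx cK cS cX ic (divr_gt0 eps_gt0 M_pos).
exists c'; split => // x Xx; apply: le_lt_trans (err x Xx) _.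
have -> : 2 * (eps / (2 * M + 1)) * M = eps * (2 * M / (2 * M + 1)).
  by field; rewrite gt_eqF.
by rewrite -[ltRHS]mulr1 ltr_pM2l // ltr_pdivrMr // mul1r ltrDl.
Qed.
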